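(* Let $n\ge 2$ and $0\le r\le n$, and work in the polynomial ring $R=k[\alpha_{i,0},\alpha_{i,1},\beta_{m,0},\beta_{m,1}: 1\le i\le n,\ 1\le m\le n-2]$, with $f_n(x,y)=\prod_{i=1}^n(\alpha_{i,0}x-\alpha_{i,1}y)$ and $f_{n-2}(x,y)=\prod_{m=1}^{n-2}(\beta_{m,0}x-\beta_{m,1}y)$. For $(n,r)=(2,2)$ one has $DR_{2,2}(f_2,f_0)=f_0^2$, where $f_0$ is the constant binary form of degree $0$. For every other pair $(n,r)$ the following identity holds in $R$: $$DR_{n,r}(f_n,f_{n-2})=\sum_{\substack{I\sqcup J=[n]\\ |I|=r}}\left(\prod_{\substack{j\in J\\ i\in[n]\setminus\{j\}}}[\alpha_i,\alpha_j]\cdot\prod_{\substack{i\in I\\ m\in[n-2]}}[\beta_m,\alpha_i]\right),$$ where $[N]=\{1,\dots,N\}$ and the sum runs over all ordered decompositions of $[n]$ into disjoint subsets $I,J$ with $|I|=r$.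
   Context: Let $k$ be a field of characteristic zero. For pairs of elements $\sigma=(\sigma_0,\sigma_1)$, $\tau=(\tau_0,\tau_1)$ of a commutative ring (written $\alpha_i=(\alpha_{i,0},\alpha_{i,1})$, $\beta_m=(\beta_{m,0},\beta_{m,1})$), the bracket is $[\sigma,\tau]:=\sigma_0\tau_1-\tau_0\sigma_1$. Resultant convention: if $f=\prod_{i=1}^d(\gamma_{i,0}x-\gamma_{i,1}y)$ and $g=\prod_{j=1}^e(\delta_{j,0}x-\delta_{j,1}y)$ are binary forms of degrees $d,e$, then $\mathrm{res}(f,g)=\prod_{i=1}^d\prod_{j=1}^e[\gamma_i,\delta_j]$; this is a polynomial in the coefficients of $f$ and $g$ (the classical resultant of binary forms), and it is used for forms with coefficients in any commutative $k$-algebra. Discriminant-resultants: for $n\ge2$, write a binary form of degree $n$ as $f(x,y)=\sum_{i=0}^n a_ix^iy^{n-i}$ and let $g$ be a binary form of degree $n-2$. The polynomials $DR_{n,r}(f,g)$ ($0\le r\le n$) in the coefficients of $f,g$ are defined by $$\sum_{r=0}^n DR_{n,r}(f,g)\,t^r=\mathrm{res}\big(f(x,y),\,x\partial_xf(x,y)+t\,xy\,g(x,y)\big)/(a_0a_n),$$ where $t$ is an indeterminate, the second argument is regarded as a binary form of degree $n$ with coefficients in $k[t]$, and the division by $a_0a_n$ is exact. $DR_{n,r}$ is bihomogeneous of degree $2n-2-r$ in the coefficients of $f$ and degree $r$ in those of $g$. *)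

From HB Require Import structures.
From mathcomp Require Import all_boot all_order all_algebra.
From mathcomp Require Import fraction.
From mathcomp Require Export mpoly.
Set Implicit Arguments. Unset Strict Implicit. Unset Printing Implicit Defensive.
Import Order.TTheory GRing.Theory Num.Theory.
Local Open Scope ring_scope.

Notation "x %:F" := (@FracField.tofrac _ x) : ring_scope.

Definition bracket (A : comNzRingType) (s t : A * A) : A := s.1 * t.2 - t.1 * s.2.

(* A binary form  sum_k a_k x^k y^(d-k)  of (formal) degree d is represented by
   the univariate polynomial  sum_k a_k X^k  (its dehomogenization at y = 1),
   whose k-th coefficient is the coefficient of x^k y^(d-k). *)
Definition prodform (A : comNzRingType) (d : nat) (g : 'I_d -> A * A) : {poly A} :=
  \prod_(i < d) ((g i).1 *: 'X - ((g i).2)%:P).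

(* Sylvester matrix of binary forms of formal degrees d, e with coefficient
   functions a, b (a k = coefficient of x^k y^(d-k)), coefficients listed in
   increasing powers of x: e shifted rows of a, then d shifted rows of b. *)
Definition sylvester (B : comNzRingType) (d e : nat) (a b : nat -> B) : 'M[B]_(e + d) :=
  \matrix_(i < e + d, j < e + d)
    if (i < e)%N then
      (if ((i <= j) && (j <= i + d))%N then a (j - i)%N else 0)
    else
      (if ((i - e <= j) && (j <= i - e + e))%N then b (j - (i - e))%N else 0).

(* Classical resultant of binary forms (Sylvester determinant).  With this
   ordering, res(prod (g_i0 x - g_i1 y), prod (h_j0 x - h_j1 y))
   = prod_{i,j} [g_i, h_j], the convention of the paper. *)
Definition bres (B : comNzRingType) (d e : nat) (a b : nat -> B) : B :=
  \det (sylvester d e a b).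

(* Coefficients (in k[t], i.e. {poly A}) of the degree-n binary form
   x d_x f + t x y g, where f has formal degree n and g formal degree n-2. *)
Definition DRsecond (A : comNzRingType) (n : nat) (f g : {poly A}) (k : nat) : {poly A} :=
  (f`_k *+ k)%:P +
  (if k is k'.+1 then (if (k' <= n - 2)%N then g`_k' else 0) else 0)%:P * 'X.

Definition DRres (A : comNzRingType) (n : nat) (f g : {poly A}) : {poly A} :=
  bres n n (fun k => (f`_k)%:P) (DRsecond n f g).

Definition DR (A : idomainType) (n r : nat) (f g : {poly A}) : {fraction A} :=
  ((DRres n f g)`_r)%:F / ((f`_0 * f`_n)%:F).

Definition nvars (n : nat) : nat := (n * 2 + (n - 2) * 2)%N.

Definition alphaV (k : fieldType) (n : nat) (i : 'I_n) : {mpoly k[nvars n]} * {mpoly k[nvars n]} :=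
  ('X_(lshift ((n - 2) * 2) (mxvec_index i (0 : 'I_2))),
   'X_(lshift ((n - 2) * 2) (mxvec_index i (1 : 'I_2)))).

Definition betaV (k : fieldType) (n : nat) (m : 'I_(n - 2)) : {mpoly k[nvars n]} * {mpoly k[nvars n]} :=
  ('X_(rshift (n * 2) (mxvec_index m (0 : 'I_2))),
   'X_(rshift (n * 2) (mxvec_index m (1 : 'I_2)))).

From mathcomp Require Import all_boot all_order all_algebra.
From mathcomp Require Import fraction.
From mathcomp Require Import mpoly.
From mathcomp Require Import ring zify.
Import Order.TTheory GRing.Theory Num.Theory.
Set Implicit Arguments. Unset Strict Implicit. Unset Printing Implicit Defensive.
Local Open Scope ring_scope.

(* Poisson's formula for the resultant: if f = prod_i (alpha_i0 x - alpha_i1 y),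
   then res(f, h) * prod_i alpha_i1^n = a_0^n * prod_i h(alpha_i), where the
   Sylvester determinant is turned block-triangular by multiplying it with a
   matrix of powers of the roots (alpha_i1 : alpha_i0) and cancelling their
   Vandermonde determinant.  For h = x d_x f + t x y g, Euler's identity gives
   h(alpha_i) = alpha_i0 alpha_i1 (prod_(j <> i) [alpha_j, alpha_i] + t g(alpha_i)),
   and expanding prod_i (P_i + t Q_i) yields the sum over the subsets I.  The
   Vandermonde determinant of the generic roots is nonzero because it
   specialises to the ordinary Vandermonde determinant of 1, ..., n, which is
   nonzero in characteristic zero. *)

(* Evaluation of the form sum_k a_k x^k y^(d-k) at x = p.2, y = p.1, so that
   the linear factor g.1 x - g.2 y evaluates to [g, p]. *)
Definition form_eval (A : comNzRingType) (d : nat) (a : nat -> A) (p : A * A) : A :=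
  \sum_(k < d.+1) a k * (p.1 ^+ (d - k) * p.2 ^+ k).

Lemma sum_window (B : comNzRingType) (N i m : nat) (G : nat -> B) : (i + m < N)%N ->
  \sum_(j < N) (if ((i <= j) && (j <= i + m))%N then G j else 0) =
  \sum_(k < m.+1) G (k + i)%N.
Proof.
move=> hN; set F := fun j => if ((i <= j) && (j <= i + m))%N then G j else 0.
rewrite -(big_mkord xpredT F) (big_cat_nat _ (n := i)) /=; [|done|lia].
rewrite [X in _ + X](big_cat_nat _ (n := (i + m.+1)%N)) /=; [|lia|lia].
rewrite big1_seq ?add0r; last first.
  move=> j /andP[_]; rewrite mem_index_iota => /andP[_ hj].
  by rewrite /F leqNgt hj.
rewrite [X in _ + X]big1_seq ?addr0; last first.
  move=> j /andP[_]; rewrite mem_index_iota => /andP[hj _].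
  by rewrite /F (_ : (j <= i + m)%N = false) ?andbF //; lia.
rewrite -{1}[i]add0n big_addn addKn big_mkord; apply: eq_bigr => -[j hj] _ /=.
by rewrite /F (_ : ((i <= j + i) && (j + i <= i + m))%N = true) //; lia.
Qed.

Section SylvesterAtRoots.
Variables (B : comNzRingType) (n : nat).

Definition roots_vandermonde (p : 'I_n -> B * B) : 'M[B]_n :=
  \matrix_(j < n, c < n) ((p c).2 ^+ j * (p c).1 ^+ (n.-1 - j)).

Definition root_power (q : B * B) (j : nat) : B := q.2 ^+ j * q.1 ^+ ((n + n).-1 - j).

Lemma sylvester_row_mul_powers (a : nat -> B) (i : nat) (q : B * B) : (i < n)%N ->
  \sum_(j < n + n) (if ((i <= j) && (j <= i + n))%N then a (j - i)%N else 0) *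
                   root_power q j
  = q.2 ^+ i * q.1 ^+ (n.-1 - i) * form_eval n a q.
Proof.
move=> hi.
under eq_bigr => j _ do rewrite (fun_if (fun x => x * root_power q j)) mul0r.
rewrite (@sum_window _ _ _ _ (fun j => a (j - i)%N * root_power q j)); last lia.
rewrite /form_eval big_distrr; apply: eq_bigr => -[k hk] _ /=.
rewrite addnK /root_power exprD.
rewrite (_ : ((n + n).-1 - (k + i) = (n.-1 - i) + (n - k))%N); last lia.
rewrite exprD; ring.
Qed.

Lemma det_sylvester_mul_vandermonde (a b : nat -> B) (p : 'I_n -> B * B) :
  (forall i, form_eval n a (p i) = 0) ->
  \det (sylvester n n a b) * (\prod_i (p i).2 ^+ n * \det (roots_vandermonde p)) =
  a 0%N ^+ n * (\det (roots_vandermonde p) * \prod_i form_eval n b (p i)).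
Proof.
move=> ha; set S := sylvester n n a b; set V := roots_vandermonde p.
pose Wf : 'M[B]_(n + n, n) := \matrix_(j, c) root_power (p c) j.
pose W := block_mx 1%:M (usubmx Wf) 0 (dsubmx Wf).
have detW : \det W = \prod_i (p i).2 ^+ n * \det V.
  rewrite det_ublock det1 mul1r.
  have -> : dsubmx Wf = V *m diag_mx (\row_c (p c).2 ^+ n).
    apply/matrixP => j c; rewrite mul_mx_diag !mxE /root_power /= exprD.
    by rewrite (_ : ((n + n).-1 - (n + j) = n.-1 - j)%N); [ring | lia].
  rewrite det_mulmx det_diag mulrC; congr (_ * _).
  by apply: eq_bigr => i _; rewrite mxE.
have SW : S *m W = block_mx (ulsubmx S) 0 (dlsubmx S)
                     (V *m diag_mx (\row_c form_eval n b (p c))).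
  rewrite -{1}(submxK S) /W mulmx_block !mulmx1 !mulmx0 !addr0.
  rewrite -!mul_row_col !hsubmxK !vsubmxK; congr block_mx.
    apply/matrixP => i c; rewrite !mxE.
    under eq_bigr => j _ do rewrite !mxE /= ltn_ord.
    by rewrite sylvester_row_mul_powers // ha mulr0.
  apply/matrixP => i c; rewrite mul_mx_diag !mxE.
  under eq_bigr => j _ do rewrite !mxE /= ltnNge leq_addr /= addKn.
  by rewrite sylvester_row_mul_powers.
have detS11 : \det (ulsubmx S) = a 0%N ^+ n.
  rewrite -det_tr det_trig; last first.
    apply/is_trig_mxP => i j hij; rewrite !mxE /= ltn_ord.
    by rewrite leqNgt hij.
  rewrite -[in RHS](card_ord n) -prodr_const; apply: eq_bigr => i _.
  by rewrite !mxE /= ltn_ord leqnn leq_addr subnn.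
have := congr1 determinant SW.
rewrite det_mulmx detW det_lblock det_mulmx det_diag detS11 => ->.
by congr (_ * (_ * _)); apply: eq_bigr => i _; rewrite mxE.
Qed.

End SylvesterAtRoots.

Section FormEvalPoly.
Variable A : comNzRingType.

Definition form_evalp (d : nat) (q : {poly A}) (p : A * A) : A :=
  form_eval d (fun k => q`_k) p.

Lemma form_evalp_linM d (g p : A * A) (q : {poly A}) : q`_d.+1 = 0 ->
  form_evalp d.+1 ((g.1 *: 'X - (g.2)%:P) * q) p = bracket g p * form_evalp d q p.
Proof.
move=> hq; rewrite /form_evalp /form_eval.
under eq_bigr => k _ do
  rewrite mulrBl coefB -scalerAl coefZ coefXM coefCM mulrBl.
rewrite sumrB [X in X - _]big_ord_recl [X in _ - X]big_ord_recr /= hq.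
rewrite !(mulr0, mul0r, add0r, addr0).
transitivity (g.1 * p.2 * \sum_(i < d.+1) q`_i * (p.1 ^+ (d - i) * p.2 ^+ i)
   - g.2 * p.1 * \sum_(i < d.+1) q`_i * (p.1 ^+ (d - i) * p.2 ^+ i));
  last by rewrite /bracket; ring.
congr (_ - _); rewrite big_distrr; apply: eq_bigr => -[i hi] _ /=.
  by rewrite add0n subSS exprS; ring.
by rewrite subSn ?exprS //; ring.
Qed.

Lemma form_evalpD d (q1 q2 : {poly A}) p :
  form_evalp d (q1 + q2) p = form_evalp d q1 p + form_evalp d q2 p.
Proof.
by rewrite /form_evalp /form_eval -big_split; apply: eq_bigr => k _; rewrite coefD mulrDl.
Qed.

Lemma form_evalpZ d c (q : {poly A}) p : form_evalp d (c *: q) p = c * form_evalp d q p.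
Proof.
by rewrite /form_evalp /form_eval big_distrr; apply: eq_bigr => k _; rewrite coefZ -mulrA.
Qed.

Lemma form_evalp_raise d (q : {poly A}) p : q`_d.+1 = 0 ->
  form_evalp d.+1 q p = p.1 * form_evalp d q p.
Proof.
move=> hq; have := @form_evalp_linM d (0, -1) p q hq.
by rewrite /= scale0r sub0r polyCN opprK mul1r => ->; rewrite /bracket /=; ring.
Qed.

Lemma form_evalpXM d (q : {poly A}) p : q`_d.+1 = 0 ->
  form_evalp d.+1 ('X * q) p = p.2 * form_evalp d q p.
Proof.
move=> hq; have := @form_evalp_linM d (1, 0) p q hq.
by rewrite /= scale1r subr0 => ->; rewrite /bracket /=; ring.
Qed.

Lemma form_evalpXM2 d (q : {poly A}) p : (size q <= d.+1)%N ->
  form_evalp d.+2 ('X * q) p = p.2 * (p.1 * form_evalp d q p).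
Proof.
move=> hq; rewrite form_evalpXM ?form_evalp_raise ?nth_default //.
exact: leq_trans hq _.
Qed.

Lemma form_evalp10 d (q : {poly A}) : form_evalp d q (1, 0) = q`_0.
Proof.
rewrite /form_evalp /form_eval big_ord_recl /= expr1n expr0 !mulr1 big1 ?addr0 //.
by move=> i _; rewrite exprS mul0r !mulr0.
Qed.

Lemma form_evalp01 d (q : {poly A}) : form_evalp d q (0, 1) = q`_d.
Proof.
rewrite /form_evalp /form_eval big_ord_recr /= subnn expr1n expr0 !mulr1 big1 ?add0r //.
move=> -[i hi] _; rewrite expr0n /=.
by rewrite (_ : (d - i == 0)%N = false) ?mul0r ?mulr0 //; lia.
Qed.

Lemma size_linear_poly (a b : A) : (size (a *: 'X - b%:P)%R <= 2)%N.
Proof.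
apply: leq_trans (size_polyD _ _) _; rewrite geq_max size_polyN.
apply/andP; split; last exact: leq_trans (size_polyC_leq1 _) _.
by apply: leq_trans (size_scale_leq _ _) _; rewrite size_polyX.
Qed.

Lemma form_evalp_big_prod (T : Type) (s : seq T) (g : T -> A * A) p :
  (size (\prod_(x <- s) ((g x).1 *: 'X - ((g x).2)%:P))%R <= (size s).+1)%N /\
  form_evalp (size s) (\prod_(x <- s) ((g x).1 *: 'X - ((g x).2)%:P)) p
    = \prod_(x <- s) bracket (g x) p.
Proof.
elim: s => [|x s [IHsize IHval]].
  rewrite !big_nil size_poly1; split=> //.
  by rewrite /form_evalp /form_eval big_ord1 coef1 /= !expr0 !mulr1.
rewrite !big_cons /=; split.
  apply: leq_trans (size_mul_leq _ _) _.
  move: IHsize (size_linear_poly (g x).1 (g x).2).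
  set a := size _; set b := size _; lia.
by rewrite form_evalp_linM ?IHval // nth_default.
Qed.

Lemma size_index_enum_ord m : size (index_enum 'I_m) = m.
Proof. by rewrite [index_enum _]unlock -enumT size_enum_ord. Qed.

Lemma form_evalp_prodform m (g : 'I_m -> A * A) p :
  (size (prodform g) <= m.+1)%N /\
  form_evalp m (prodform g) p = \prod_(j < m) bracket (g j) p.
Proof. by have := form_evalp_big_prod (index_enum 'I_m) g p; rewrite size_index_enum_ord. Qed.

Lemma form_evalp_prodform_but m (g : 'I_m -> A * A) (i : 'I_m) p :
  let F := \prod_(j < m | j != i) ((g j).1 *: 'X - ((g j).2)%:P) in
  (size F <= m)%N /\ form_evalp m.-1 F p = \prod_(j < m | j != i) bracket (g j) p.
Proof.
have size_but : size [seq j <- index_enum 'I_m | j != i] = m.-1.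
  rewrite size_filter -[in RHS](size_index_enum_ord m) -(count_predC (pred1 i)).
  by rewrite count_uniq_mem ?index_enum_uniq // mem_index_enum add1n.
have [hsize hval] := form_evalp_big_prod [seq j <- index_enum 'I_m | j != i] g p.
rewrite !big_filter size_but in hsize hval.
by split=> //; apply: leq_trans hsize _; case: m i g {size_but hval} => [[]|m].
Qed.

(* Euler's identity at a root: only the derivative of the vanishing factor survives. *)
Lemma form_evalp_XMderiv_prodform m (g : 'I_m -> A * A) (i : 'I_m) :
  form_evalp m ('X * (prodform g)^`()) (g i) =
  (g i).1 * (g i).2 * \prod_(j < m | j != i) bracket (g j) (g i).
Proof.
case: m g i => [g []//|m g i].
have [hF hFval] := form_evalp_prodform_but g i (g i).
rewrite /prodform (bigD1 i) //=.
move: hF hFval; set L := _ *: 'X - _; set F := \prod_(j < m.+1 | j != i) _ => hF hFval.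
have -> : 'X * (L * F)^`() = (g i).1 *: ('X * F) + L * ('X * F^`()).
  by rewrite derivM /L derivB derivZ derivX derivC subr0 -!mul_polyC; ring.
rewrite form_evalpD form_evalpZ form_evalpXM; last by rewrite nth_default.
rewrite form_evalp_linM; last by rewrite coefXM /= coef_deriv (nth_default _ hF) mul0rn.
by rewrite /bracket subrr mul0r addr0 hFval mulrA.
Qed.

Lemma form_eval_polyC d (u : nat -> A) (p : A * A) :
  form_eval d (fun k => (u k)%:P) ((p.1)%:P, (p.2)%:P) = (form_eval d u p)%:P.
Proof.
by rewrite /form_eval rmorph_sum; apply: eq_bigr => k _ /=; rewrite !rmorphM !rmorphXn.
Qed.

Lemma form_eval_polyCX d (u w : nat -> A) (p : A * A) :
  form_eval d (fun k => (u k)%:P + (w k)%:P * 'X) ((p.1)%:P, (p.2)%:P) =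
  (form_eval d u p)%:P + (form_eval d w p)%:P * 'X.
Proof.
rewrite /form_eval !rmorph_sum big_distrl -big_split; apply: eq_bigr => k _ /=.
by rewrite !rmorphM !rmorphXn /=; ring.
Qed.

Lemma form_eval_DRsecond n (f g : {poly A}) (p : A * A) : g`_(n.-1) = 0 ->
  form_eval n (DRsecond n f g) ((p.1)%:P, (p.2)%:P) =
  (form_evalp n ('X * f^`()) p)%:P + (form_evalp n ('X * g) p)%:P * 'X.
Proof.
move=> hg; rewrite /DRsecond form_eval_polyCX /form_evalp /form_eval.
congr (_%:P + _%:P * _); apply: eq_bigr => -[[|j] hj] _ /=;
  rewrite coefXM //= ?coef_deriv //.
by case: ifP => // hjn; rewrite (_ : j = n.-1) ?hg //; lia.
Qed.

Lemma coef_prod_polyCX m (P Q : 'I_m -> A) r :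
  (\prod_(i < m) ((P i)%:P + (Q i)%:P * 'X))`_r =
  \sum_(I : {set 'I_m} | #|I| == r) (\prod_(j in ~: I) P j * \prod_(i in I) Q i).
Proof.
under eq_bigr do rewrite addrC.
rewrite bigA_distr coef_sum [RHS]big_mkcond /=; apply: eq_bigr => I _.
rewrite (bigID (mem I)) /=.
have -> : \prod_(i in I) (if i \in I then (Q i)%:P * 'X else (P i)%:P)
          = \prod_(i in I) ((Q i)%:P * 'X) by apply: eq_bigr => i ->.
have -> : \prod_(i | i \notin I) (if i \in I then (Q i)%:P * 'X else (P i)%:P)
          = \prod_(i in ~: I) (P i)%:P.
  by apply: eq_big => [i|i /negbTE ->]; rewrite ?in_setC.
rewrite big_split /= -!(rmorph_prod (@polyC A)) prodr_const.
rewrite mulrAC -rmorphM coefCM coefXn mulrC [in RHS]eq_sym.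
by case: eqP; rewrite ?mul1r ?mul0r // mulrC.
Qed.

End FormEvalPoly.

Lemma sign_exprn (A : comNzRingType) n : ((-1) ^+ n) ^+ n = (-1) ^+ n :> A.
Proof. by rewrite -exprM -signr_odd oddM andbb signr_odd. Qed.

Section DRAtRoots.
Variables (A : idomainType) (n : nat) (al : 'I_n -> A * A).
Hypothesis n_ge2 : (2 <= n)%N.
Hypothesis al2_neq0 : forall i, (al i).2 != 0.
Hypothesis vandermonde_neq0 : \det (roots_vandermonde al) != 0.

Let f := prodform al.

Lemma prodform_coef0 : f`_0 = (-1) ^+ n * \prod_(i < n) (al i).2.
Proof.
have [_] := form_evalp_prodform al (1, 0); rewrite form_evalp10 => ->.
rewrite (eq_bigr (fun j => - (al j).2)); last by move=> j _; rewrite /bracket /=; ring.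
by rewrite prodrN card_ord.
Qed.

Lemma prodform_coefn : f`_n = \prod_(i < n) (al i).1.
Proof.
have [_] := form_evalp_prodform al (0, 1); rewrite form_evalp01 => ->.
by apply: eq_bigr => j _; rewrite /bracket /=; ring.
Qed.

Lemma DRres_prodform (g : {poly A}) : (size g <= n.-1)%N ->
  DRres n f g = (f`_0 * f`_n)%:P *
    \prod_(i < n) ((\prod_(j < n | j != i) bracket (al j) (al i))%:P +
                   (form_evalp (n - 2) g (al i))%:P * 'X).
Proof.
move=> hg; set E := \prod_(i < n) _.
pose P i : {poly A} * {poly A} := (((al i).1)%:P, ((al i).2)%:P).
set a0 := \prod_(i < n) (al i).1; set a1 := \prod_(i < n) (al i).2.
set V := \det (roots_vandermonde al).
have f_roots i : form_eval n (fun k => (f`_k)%:P) (P i) = 0.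
  have [_ fi] := form_evalp_prodform al (al i).
  rewrite form_eval_polyC; move: fi; rewrite /form_evalp => ->.
  by rewrite (bigD1 i) //= /bracket subrr mul0r rmorph0.
have second_roots i : form_eval n (DRsecond n f g) (P i) =
    ((al i).1 * (al i).2)%:P * ((\prod_(j < n | j != i) bracket (al j) (al i))%:P +
                                (form_evalp (n - 2) g (al i))%:P * 'X).
  rewrite form_eval_DRsecond ?nth_default // form_evalp_XMderiv_prodform.
  have -> : form_evalp n ('X * g) (al i) =
            (al i).2 * ((al i).1 * form_evalp (n - 2) g (al i)).
    rewrite -form_evalpXM2; last by rewrite (leq_trans hg) //; lia.
    by congr form_evalp; lia.
  by rewrite !rmorphM /=; ring.
have := det_sylvester_mul_vandermonde (DRsecond n f g) f_roots.
have -> : roots_vandermonde P = map_mx polyC (roots_vandermonde al).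
  by apply/matrixP => j c; rewrite !mxE rmorphM !rmorphXn.
have -> : \prod_i (P i).2 ^+ n = (a1 ^+ n)%:P.
  by rewrite prodrXl -(rmorph_prod (@polyC _)) rmorphXn.
have -> : \prod_i form_eval n (DRsecond n f g) (P i) = (a0 * a1)%:P * E.
  rewrite (eq_bigr _ (fun i _ => second_roots i)) big_split /=.
  by rewrite -(rmorph_prod (@polyC _)) big_split.
rewrite det_map_mx prodform_coef0 prodform_coefn -/a0 -/a1 -/V => eq_res.
have a1V_neq0 : ((a1 ^+ n * V)%:P : {poly A}) != 0.
  by rewrite polyC_eq0 mulf_neq0 ?expf_neq0 //; apply/prodf_neq0 => i _.
apply: (mulIf a1V_neq0); rewrite /DRres /bres [in LHS]rmorphM eq_res.
by rewrite -rmorphXn exprMn sign_exprn !rmorphM !rmorphXn rmorphN1; ring.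
Qed.

Hypothesis al1_neq0 : forall i, (al i).1 != 0.

Lemma DR_prodform r (g : {poly A}) : (size g <= n.-1)%N ->
  DR n r f g = (\sum_(I : {set 'I_n} | #|I| == r)
    ((\prod_(j in ~: I) \prod_(i < n | i != j) bracket (al i) (al j)) *
     (\prod_(i in I) form_evalp (n - 2) g (al i))))%:F.
Proof.
move=> hg; have lead_neq0 : (f`_0 * f`_n)%:F != 0.
  rewrite tofrac_eq0 prodform_coef0 prodform_coefn.
  by rewrite !mulf_neq0 ?expf_neq0 ?oppr_eq0 ?oner_eq0 //; apply/prodf_neq0 => i _.
rewrite /DR DRres_prodform // coefCM coef_prod_polyCX tofracM mulrAC divff //.
by rewrite mul1r.
Qed.

End DRAtRoots.

Section GenericRoots.
Variables (k : fieldType) (n : nat).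
Hypothesis k_char0 : [pchar k] =i pred0.

Definition alpha_index (i : 'I_n) (e : 'I_2) : 'I_(nvars n) :=
  lshift ((n - 2) * 2) (mxvec_index i e).

Lemma alpha_index_inj i e i' e' : alpha_index i e = alpha_index i' e' -> (i, e) = (i', e').
Proof. by move/lshift_inj/cast_ord_inj/enum_rank_inj. Qed.

Definition spec_alpha (x : 'I_(nvars n)) : k :=
  if [pick c : 'I_n | x == alpha_index c 1] is Some c then (c.+1)%:R else 1.

Lemma meval_spec_alpha i :
  meval spec_alpha (@alphaV k n i).1 = 1 /\ meval spec_alpha (@alphaV k n i).2 = (i.+1)%:R.
Proof.
rewrite /alphaV /= !mevalXU -/(alpha_index i 0) -/(alpha_index i 1) /spec_alpha; split.
  by case: pickP => [c /eqP/alpha_index_inj [_]|].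
by case: pickP => [c /eqP/alpha_index_inj [->]//|/(_ i)]; rewrite eqxx.
Qed.

Lemma natrS_neq0 m : ((m.+1)%:R : k) != 0.
Proof. by have /pcharf0P -> := k_char0. Qed.

Lemma alphaV1_neq0 i : (@alphaV k n i).1 != 0.
Proof.
apply/negP => /eqP a0; have := (meval_spec_alpha i).1.
by rewrite a0 raddf0 => /esym/eqP; rewrite oner_eq0.
Qed.

Lemma alphaV2_neq0 i : (@alphaV k n i).2 != 0.
Proof.
apply/negP => /eqP a0; have := (meval_spec_alpha i).2.
by rewrite a0 raddf0 => /esym/eqP; rewrite (negbTE (natrS_neq0 _)).
Qed.

Lemma det_alphaV_vandermonde_neq0 : \det (roots_vandermonde (@alphaV k n)) != 0.
Proof.
have spec_V : map_mx (meval spec_alpha) (roots_vandermonde (@alphaV k n)) =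
              Vandermonde n (\row_c ((c : nat).+1)%:R).
  apply/matrixP => j c; rewrite !mxE rmorphM !rmorphXn.
  have [e1 e2] := meval_spec_alpha c.
  rewrite -[LHS]/(meval spec_alpha _ ^+ j * meval spec_alpha _ ^+ _) e1 e2.
  by rewrite expr1n mulr1.
apply/negP => /eqP V0.
have : \det (map_mx (meval spec_alpha) (roots_vandermonde (@alphaV k n))) = 0.
  by rewrite det_map_mx V0 raddf0.
rewrite spec_V det_Vandermonde => /eqP; apply/negP/prodf_neq0 => i _.
apply/prodf_neq0 => j hij; rewrite !mxE -natrB; last by rewrite ltnS ltnW.
by rewrite subSS -(subnSK hij) natrS_neq0.
Qed.

End GenericRoots.

Theorem theorem2p1 (k : fieldType) (hk : [pchar k] =i pred0) (n r : nat)
  (hn : (2 <= n)%N) (hr : (r <= n)%N) :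
  let f := prodform (@alphaV k n) in
  let g := prodform (@betaV k n) in
  if ((n == 2) && (r == 2))%N then
    (forall c : {mpoly k[nvars n]},
       DR n r f c%:P = (c ^+ 2)%:F)
  else
    DR n r f g =
    (\sum_(I : {set 'I_n} | #|I| == r)
       ((\prod_(j in ~: I) \prod_(i < n | i != j) bracket (alphaV k i) (alphaV k j)) *
        (\prod_(i in I) \prod_(m < n - 2) bracket (betaV k m) (alphaV k i))))%:F.
Proof.
have DR_alpha := DR_prodform hn (@alphaV2_neq0 k n hk) (det_alphaV_vandermonde_neq0 n hk)
                             (@alphaV1_neq0 k n).
move=> f g; case: ifP => [/andP[/eqP en /eqP er] c | _].
  rewrite DR_alpha; last by apply: leq_trans (size_polyC_leq1 _) _; rewrite en.
  subst n r; congr (_%:F).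
  rewrite (big_pred1 [set: 'I_2]); last first.
    move=> I /=; rewrite eqEcard subsetT cardsT card_ord eqn_leq.
    by have := max_card I; rewrite card_ord => ->.
  rewrite setCT big_set0 mul1r (eq_bigr (fun _ => c)) ?prodr_const ?cardsT ?card_ord //.
  by move=> i _; rewrite /form_evalp /form_eval big_ord1 coefC /= !expr0 !mulr1.
rewrite DR_alpha; last first.
  have [size_g _] := form_evalp_prodform (@betaV k n) (0, 0).
  by apply: leq_trans size_g _; lia.
congr (_%:F); apply: eq_bigr => I _; congr (_ * _); apply: eq_bigr => i _.
by have [_ ->] := form_evalp_prodform (@betaV k n) (alphaV k i).
Qed.
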